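(* Let $A>0$, $B\in\mathbb R$, $0<E<|B|$ and $z_\gamma\in\mathbb R\setminus\{0\}$. The set $$\left\{\frac{\sqrt{4\pi A\ell(\pi A\ell-z_\gamma)}}{\sqrt{B^2/E^2-1}}:\ \ell\in\mathbb Z\setminus\{0\},\ \frac{2E}{E-|B|}<\frac{z_\gamma}{\pi A\ell}<\frac{2E}{E+|B|}\right\}$$ is bounded below by $|z_\gamma|$.
   Context: This set is the set of lengths of non-central closed magnetic geodesics of energy $E$ in the free homotopy class of a central element $\exp(z_\gamma Z)$ of a compact quotient of the three-dimensional Heisenberg group with metric parameter $A$ and magnetic parameter $B$; the claim is purely about the displayed set of real numbers. *)

From Stdlib Require Import Reals ZArith.
Open Scope R_scope.

Definition length_set (A B E z : R) : R -> Prop :=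
  fun x => exists l : Z, l <> 0%Z /\
    2 * E / (E - Rabs B) < z / (PI * A * IZR l) /\
    z / (PI * A * IZR l) < 2 * E / (E + Rabs B) /\
    x = sqrt (4 * PI * A * IZR l * (PI * A * IZR l - z))
        / sqrt (B ^ 2 / E ^ 2 - 1).

(* Put [a = pi A l], [b = |B|] and [t = z / a].  Since [E - b < 0 < E + b], the two
   window conditions say [2E - t (E - b) > 0] and [2E - t (E + b) > 0]; their product is
   [4E^2 (1 - t) - t^2 (b^2 - E^2) > 0].  Multiplied by [a^2 / E^2] this is
   [z^2 (B^2/E^2 - 1) < 4a(a - z)], and taking square roots gives the bound. *)
From Stdlib Require Import Reals ZArith Lra Psatz.
Open Scope R_scope.

Lemma window_quadratic_pos (E b t : R) :
  0 < E -> E < b -> 2 * E / (E - b) < t -> t < 2 * E / (E + b) ->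
  t ^ 2 * (b ^ 2 - E ^ 2) < 4 * E ^ 2 * (1 - t).
Proof.
  intros HE Hb Hlo Hhi.
  assert (Hlin_minus : 0 < 2 * E - t * (E - b)).
  { assert (Hq : 2 * E / (E - b) * (E - b) = 2 * E) by (field; lra). nra. }
  assert (Hlin_plus : 0 < 2 * E - t * (E + b)).
  { assert (Hq : 2 * E / (E + b) * (E + b) = 2 * E) by (field; lra). nra. }
  pose proof (Rmult_lt_0_compat _ _ Hlin_minus Hlin_plus) as Hprod.
  nra.
Qed.

Lemma length_radicand_bound (a b E z : R) :
  0 < E -> E < b -> a <> 0 ->
  2 * E / (E - b) < z / a -> z / a < 2 * E / (E + b) ->
  z ^ 2 * (b ^ 2 / E ^ 2 - 1) <= 4 * a * (a - z).
Proof.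
  intros HE Hb Ha Hlo Hhi.
  pose proof (window_quadratic_pos E b (z / a) HE Hb Hlo Hhi) as Hkey.
  replace (z ^ 2 * (b ^ 2 / E ^ 2 - 1))
    with (a ^ 2 / E ^ 2 * ((z / a) ^ 2 * (b ^ 2 - E ^ 2))) by (field; lra).
  replace (4 * a * (a - z))
    with (a ^ 2 / E ^ 2 * (4 * E ^ 2 * (1 - z / a))) by (field; lra).
  apply Rmult_le_compat_l; [| lra].
  apply Rmult_le_pos; [apply pow2_ge_0 | left; apply Rinv_0_lt_compat; nra].
Qed.

Lemma abs_le_sqrt_div (z X k : R) :
  0 < k -> z ^ 2 * k <= X -> Rabs z <= sqrt X / sqrt k.
Proof.
  intros Hk Hle.
  pose proof (sqrt_lt_R0 k Hk) as Hsk.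
  apply Rmult_le_reg_r with (sqrt k); [exact Hsk |].
  replace (sqrt X / sqrt k * sqrt k) with (sqrt X) by (field; lra).
  rewrite <- sqrt_Rsqr_abs, <- sqrt_mult_alt by apply Rle_0_sqr.
  apply sqrt_le_1_alt.
  unfold Rsqr. lra.
Qed.

Theorem lemma4p15 (A B E z : R) :
  0 < A -> 0 < E -> E < Rabs B -> z <> 0 ->
  forall x, length_set A B E z x -> Rabs z <= x.
Proof.
  intros HA HE HB _ x [l [Hl [Hlo [Hhi ->]]]].
  set (a := PI * A * IZR l) in *.
  assert (Ha : a <> 0).
  { pose proof PI_RGT_0. unfold a.
    apply Rmult_integral_contrapositive_currified; [nra | exact (not_0_IZR l Hl)]. }
  assert (Hk : 0 < B ^ 2 / E ^ 2 - 1).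
  { rewrite <- (pow2_abs B).
    replace (Rabs B ^ 2 / E ^ 2 - 1) with ((Rabs B ^ 2 - E ^ 2) / E ^ 2) by (field; lra).
    apply Rdiv_lt_0_compat; nra. }
  apply abs_le_sqrt_div; [exact Hk |].
  replace (4 * PI * A * IZR l * (a - z)) with (4 * a * (a - z)) by (unfold a; ring).
  rewrite <- (pow2_abs B).
  apply length_radicand_bound; assumption.
Qed.
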